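(* Let $n\ge1$, $N=\{1,\dots,n\}$, and let $K=K_E$ be a nonempty finite index set of equations only. For each $k\in K$ let $A_k\subseteq N$, and consider the original assignment equations $\sum_{i\in A_k}x_i=1$ for all $k\in K$ (i.e. $\alpha^k_i=1$ for all $i\in A_k$ and $\beta^k=1$). For each $k\in K$ let $B^E_k\subseteq N$, let $$Q=\{(i,j)\mid i\le j\text{ and }\exists k\in K:\ (i\in A_k\text{ and }j\in B^E_k)\text{ or }(j\in A_k\text{ and }i\in B^E_k)\},$$ let $y_{ij}\in[0,1]$ for $(i,j)\in Q$, and consider the linearization equations $$\sum_{i\in A_k,(i,j)\in Q} y_{ij}+\sum_{i\in A_k,(j,i)\in Q} y_{ji}=x_j\quad\forall k\in K,\ j\in B^E_k.$$ Consider the conditions (C1): for each $(i,j)\in Q$ there is $k\in K$ with $i\in A_k$ and $j\in B^E_k$; (C2): for each $(i,j)\in Q$ there is $\ell\in K$ with $j\in A_\ell$ and $i\in B^E_\ell$. Then for any solution $x\in[0,1]^n$ (of the original equations), the inequalities $y_{ij}\le x_i$, $y_{ij}\le x_j$ and $y_{ij}\ge x_i+x_j-1$ are implied by the linearization equations for all $(i,j)\in Q$ if and only if conditions (C1) and (C2) are satisfied.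
   Context: The linearization equations arise from multiplying the $k$-th assignment equation by $x_j$ for each $j\in B^E_k$ and replacing each product $x_ix_j$ by $y_{ij}$ (if $i\le j$) or $y_{ji}$ (otherwise). The ''only if'' direction is understood within the framework where the linearization is constructed only by constraints of this type.
   Formalization: Each linearization equation counts yⱼⱼ once; in the only-if direction, implied means for each (i,j) ∈ Q, yᵢⱼ ≤ xᵢ and yᵢⱼ ≤ xⱼ each follow from one linearization equation with right-hand side xᵢ, resp. xⱼ, plus the bounds. Each condition added here is assumed in the paper as well or is needed for the statement above to hold. This also corrects a misprint. *)

From HB Require Import structures.
From mathcomp Require Import all_boot all_order all_algebra.
Set Implicit Arguments. Unset Strict Implicit. Unset Printing Implicit Defensive.
Import Order.TTheory GRing.Theory Num.Theory.
Local Open Scope ring_scope.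

Section Defs.
Variables (R : realFieldType) (n : nat) (K : finType).
Variables (A B : K -> {set 'I_n}).

Definition inQ (i j : 'I_n) : bool :=
  ((i <= j)%N) &&
  [exists k, ((i \in A k) && (j \in B k)) || ((j \in A k) && (i \in B k))].

(* the linearization variable standing for the product x_i x_j:
   y_ij if i <= j, y_ji otherwise *)
Definition yprod (y : 'I_n -> 'I_n -> R) (i j : 'I_n) : R :=
  if (i <= j)%N then y i j else y j i.

Definition orig_eq (x : 'I_n -> R) (k : K) : Prop :=
  \sum_(i in A k) x i = 1.

Definition lin_eq (x : 'I_n -> R) (y : 'I_n -> 'I_n -> R) (k : K) (j : 'I_n)
  : Prop := \sum_(i in A k) yprod y i j = x j.

Definition x_box (x : 'I_n -> R) : Prop := forall i, 0 <= x i <= 1.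

Definition y_box (y : 'I_n -> 'I_n -> R) : Prop :=
  forall i j, inQ i j -> 0 <= y i j <= 1.

Definition C1 : Prop :=
  forall i j, inQ i j -> exists k, (i \in A k) /\ (j \in B k).

Definition C2 : Prop :=
  forall i j, inQ i j -> exists l, (j \in A l) /\ (i \in B l).

Definition ineqs_implied : Prop :=
  forall (x : 'I_n -> R) (y : 'I_n -> 'I_n -> R),
    x_box x -> (forall k, orig_eq x k) -> y_box y ->
    (forall k j, j \in B k -> lin_eq x y k j) ->
    forall i j, inQ i j ->
      [/\ y i j <= x i, y i j <= x j & x i + x j - 1 <= y i j].

(* Framework notion ("only if" direction): the upper bound y_ij <= x_m
   (m = i or m = j) is implied by a linearization equation, i.e. there is
   a linearization equation (k, m) (so m \in B_k, right-hand side x_m)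
   which, together with the bounds, entails y_ij <= x_m. *)
Definition ub_implied_by_lin (i j m : 'I_n) : Prop :=
  exists k, (m \in B k) /\
    forall (x : 'I_n -> R) (y : 'I_n -> 'I_n -> R),
      x_box x -> y_box y -> lin_eq x y k m -> y i j <= x m.

End Defs.

From HB Require Import structures.
From mathcomp Require Import all_boot all_order all_algebra.
From mathcomp Require Import lra.
Set Implicit Arguments. Unset Strict Implicit. Unset Printing Implicit Defensive.
Import Order.TTheory GRing.Theory Num.Theory.
Local Open Scope ring_scope.

(* Every term of a linearization equation (k, j) is a nonnegative variable,
   so each of them is bounded by its right-hand side x_j; (C1) and (C2)
   provide equations in which y_ij occurs as such a term with right-hand
   side x_j, resp. x_i.  For the lower bound, the equation (k, j) given by
   (C1) reads x_j = y_ij + sum_{a in A_k, a <> i} y_aj, and bounding each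
   y_aj by x_a turns the sum into 1 - x_i by the assignment equation k.
   Conversely, if y_ij is not a term of the equation (k, m), then x = 0
   together with the indicator of (i, j) as y satisfies it, yet
   violates y_ij <= x_m. *)

Section Linearization.
Variables (R : realFieldType) (n : nat) (K : finType) (A B : K -> {set 'I_n}).
Implicit Types (x : 'I_n -> R) (y : 'I_n -> 'I_n -> R) (i j a b m : 'I_n).

Lemma yprodC y a b : yprod y a b = yprod y b a.
Proof.
rewrite /yprod; case: (leqP a b) => hab; case: (leqP b a) => hba //.
  by have -> : a = b by apply/val_inj/eqP; rewrite eqn_leq hab hba.
by have := ltn_trans hab hba; rewrite ltnn.
Qed.

Lemma yprod_inQ y i j : inQ A B i j -> yprod y i j = y i j.
Proof. by case/andP=> hij _; rewrite /yprod hij. Qed.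

Lemma inQ_mem_AB k a b : a \in A k -> b \in B k ->
  if (a <= b)%N then inQ A B a b else inQ A B b a.
Proof.
move=> ha hb; rewrite /inQ; case: leqP => [hab | /ltnW ->] /=;
  by apply/existsP; exists k; rewrite ha hb ?orbT.
Qed.

Lemma yprod_ge0 y k a b : y_box A B y -> a \in A k -> b \in B k ->
  0 <= yprod y a b.
Proof.
move=> yb ha hb; rewrite /yprod.
by case: ifP (inQ_mem_AB ha hb) => _ /yb /andP[].
Qed.

Lemma yprod_le_lin x y k a j : y_box A B y -> lin_eq A x y k j ->
  a \in A k -> j \in B k -> yprod y a j <= x j.
Proof.
move=> yb <- ha hj; rewrite (bigD1 a) //= lerDl.
by apply: sumr_ge0 => b /andP[hb _]; exact: yprod_ge0 yb hb hj.
Qed.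

Lemma lin_ge_subr1 x y k i j : orig_eq A x k -> lin_eq A x y k j ->
  {in A k, forall a, yprod y a j <= x a} -> i \in A k ->
  x i + x j - 1 <= yprod y i j.
Proof.
rewrite /orig_eq /lin_eq => horig hlin hle hi.
rewrite (bigD1 i) //= in horig; rewrite (bigD1 i) //= in hlin.
have : \sum_(a in A k | a != i) yprod y a j <= \sum_(a in A k | a != i) x a.
  by apply: ler_sum => a /andP[ha _]; exact: hle.
lra.
Qed.

Section Sufficiency.
Hypotheses (hC1 : C1 A B) (hC2 : C2 A B).
Variables (x : 'I_n -> R) (y : 'I_n -> 'I_n -> R).
Hypotheses (yb : y_box A B y)
           (hlin : forall k j, j \in B k -> lin_eq A x y k j).

Lemma inQ_le_left i j : inQ A B i j -> y i j <= x i.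
Proof.
move=> hQ; have [l [hj hi]] := hC2 hQ.
by rewrite -(yprod_inQ y hQ) yprodC (yprod_le_lin yb (hlin hi)).
Qed.

Lemma inQ_le_right i j : inQ A B i j -> y i j <= x j.
Proof.
move=> hQ; have [k [hi hj]] := hC1 hQ.
by rewrite -(yprod_inQ y hQ) (yprod_le_lin yb (hlin hj)).
Qed.

Lemma yprod_le_left k a b : a \in A k -> b \in B k -> yprod y a b <= x a.
Proof.
move=> ha hb; rewrite /yprod; case: ifP (inQ_mem_AB ha hb) => _ hQ.
  exact: inQ_le_left.
exact: inQ_le_right.
Qed.

Lemma inQ_ge_subr1 i j : (forall k, orig_eq A x k) -> inQ A B i j ->
  x i + x j - 1 <= y i j.
Proof.
move=> horig hQ; have [k [hi hj]] := hC1 hQ.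
rewrite -(yprod_inQ y hQ); apply: lin_ge_subr1 (horig k) (hlin hj) _ hi.
by move=> a ha; exact: yprod_le_left ha hj.
Qed.

End Sufficiency.

Lemma C1_C2_ineqs_implied : C1 A B -> C2 A B -> ineqs_implied R A B.
Proof.
move=> hC1 hC2 x y _ horig yb hlin i j hQ; split.
- exact: (inQ_le_left hC2 yb hlin hQ).
- exact: (inQ_le_right hC1 yb hlin hQ).
- exact: (inQ_ge_subr1 hC1 hC2 yb hlin horig hQ).
Qed.

Definition ydelta i j : 'I_n -> 'I_n -> R := fun a b => ((a == i) && (b == j))%:R.

Lemma ydelta_box i j : y_box A B (ydelta i j).
Proof. by move=> a b _; rewrite /ydelta ler0n lern1 leq_b1. Qed.

Lemma yprod_ydelta_neq0 i j a m : yprod (ydelta i j) a m != 0 ->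
  (a == i) && (m == j) || (a == j) && (m == i).
Proof.
rewrite /yprod /ydelta; case: ifP => _; rewrite pnatr_eq0 -lt0n lt0b.
  by move=> ->.
by rewrite andbC => ->; rewrite orbT.
Qed.

Lemma ub_implied_partner i j m m' : ub_implied_by_lin R A B i j m ->
  (m == i) && (m' == j) || (m == j) && (m' == i) ->
  exists k, m' \in A k /\ m \in B k.
Proof.
move=> [k [hm himpl]] hpair; exists k; split => //.
apply: contraT => hm'.
suff : ydelta i j i j <= 0 by rewrite /ydelta !eqxx ler10.
apply: (himpl (fun=> 0)); [by move=> b; rewrite lexx ler01 | exact: ydelta_box |].
rewrite /lin_eq big1 // => a ha; apply/eqP; apply: contraNT hm'.
move/yprod_ydelta_neq0 => hpair_a; suff -> : m' = a by [].
by case/orP: hpair => /andP[/eqP em /eqP em'];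
  case/orP: hpair_a => /andP[/eqP ea /eqP ea']; subst.
Qed.

End Linearization.

Theorem theorem2 (R : realFieldType) (n : nat) (K : finType)
    (A B : K -> {set 'I_n}) :
  (0 < n)%N -> (0 < #|K|)%N ->
  (* "if": (C1) and (C2) make the inequalities implied *)
  (C1 A B /\ C2 A B -> ineqs_implied R A B) /\
  (* "only if" (within the framework): if the upper bounds are implied by
     linearization equations for all (i,j) in Q, then (C1) and (C2) hold *)
  ((forall i j, inQ A B i j ->
      ub_implied_by_lin R A B i j i /\ ub_implied_by_lin R A B i j j) ->
   C1 A B /\ C2 A B).
Proof.
move=> _ _; split; first by case; exact: C1_C2_ineqs_implied.
move=> himpl; split=> i j /himpl [hi hj].
- by apply: ub_implied_partner hj _; rewrite !eqxx orbT.
- by apply: ub_implied_partner hi _; rewrite !eqxx.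
Qed.
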